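(* Let $G$ be a connected threshold graph of order $n\ge 4$ and size $m$ with $n-1<m<\binom{n}{2}$, with $c$ type 1 vertices, backwards zero position sequence $(b_1,\ldots,b_z)$ and $F_1=\sum_{i=1}^z b_i^2$. Define $(\mathrm{LW}''_k)_{k\in\mathbb{N}_0}$ by $\mathrm{LW}''_0=1$ and \[\mathrm{LW}''_k=c\,\mathrm{LW}''_{k-1}+\sum_{r=0}^{k-3}\mathrm{LW}''_r\sum_{q\in\mathbb{N}_0}\binom{k-3-r-q}{q}F_1\Big(\sum_{i=1}^z b_i\Big)^q\qquad(k\in\mathbb{N}).\] Then for every $k\ge 3$, \[\mathrm{LW}''_k-(c+1)\mathrm{LW}''_{k-1}+\Big(c-\sum_{i=1}^z b_i\Big)\mathrm{LW}''_{k-2}+\Big(c\sum_{i=1}^z b_i-F_1\Big)\mathrm{LW}''_{k-3}=0.\]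
   Context: A threshold graph is a simple graph whose vertices can be ordered $v_1,\ldots,v_n$ so that for each $2\le i\le n$, $v_i$ is either adjacent to all of $v_1,\ldots,v_{i-1}$ (then $a_i=1$) or to none of them (then $a_i=0$); by convention $a_1=1$. Vertex $v_i$ is of type 1 if $a_i=1$ and of type 0 if $a_i=0$; $c$ and $z$ are the numbers of type 1 and type 0 vertices. The backwards zero position sequence $(b_1,\ldots,b_z)$ is defined by letting $b_i$ be the number of type 1 vertices appearing after the $i$-th type 0 vertex in the order $v_1,\ldots,v_n$. Binomial coefficients $\binom{a}{q}$ with integer $a$ and $q\in\mathbb{N}_0$ are taken to be $0$ whenever $a<q$. *)

From mathcomp Require Import all_boot all_order all_algebra.
Set Implicit Arguments. Unset Strict Implicit. Unset Printing Implicit Defensive.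
Import GRing.Theory Num.Theory.

(* Threshold graph on vertices 'I_n (vertex v_{i+1} is the ordinal i),
   with creation sequence a : 'I_n -> bool (a i = true means type 1). *)

Definition is_threshold_graph_of (n : nat) (a : 'I_n -> bool) (e : rel 'I_n) :=
  [/\ forall i : 'I_n, val i = 0 -> a i,
      forall i j : 'I_n, (i < j)%N -> e i j = a j,
      symmetric e & irreflexive e].

Definition connected_graph (n : nat) (e : rel 'I_n) :=
  forall x y : 'I_n, connect e x y.

Definition graph_size (n : nat) (e : rel 'I_n) : nat :=
  #|[set p : 'I_n * 'I_n | (p.1 < p.2)%N && e p.1 p.2]|.

Definition ctype1 (n : nat) (a : 'I_n -> bool) : nat := #|[set i | a i]|.

Definition bzps (n : nat) (a : 'I_n -> bool) : seq nat :=
  map (fun i : 'I_n => #|[set j : 'I_n | (i < j)%N && a j]|)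
      (filter (fun i : 'I_n => ~~ a i) (enum 'I_n)).

Definition sum_b (n : nat) (a : 'I_n -> bool) : nat := sumn (bzps a).
Definition F1 (n : nat) (a : 'I_n -> bool) : nat :=
  sumn [seq b ^ 2 | b <- bzps a].

From mathcomp Require Import all_boot all_order all_algebra.
From mathcomp Require Import ring zify.
Set Implicit Arguments. Unset Strict Implicit. Unset Printing Implicit Defensive.
Import GRing.Theory Num.Theory.
Local Open Scope ring_scope.

(* The inner sum over q is the Jacobsthal polynomial
   h_j = \sum_q C(j - q, q) S^q, which satisfies h_(j+2) = h_(j+1) + S h_j.
   Hence the recursion reads LW_k = c LW_(k-1) + F T_k, where T_k is the
   convolution \sum_(r < k-2) LW_r h_(k-3-r), and the recurrence of h gives
   T_(j+3) = T_(j+2) + S T_(j+1) + LW_j.  Eliminating T from four consecutive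
   instances of the recursion yields the three-term recurrence. *)

Lemma bin_diagS j q : 'C(j.+1 - q, q.+1) = ('C(j - q, q) + 'C(j - q, q.+1))%N.
Proof.
have [le_qj | lt_jq] := leqP q j; first by rewrite subSn // binS addnC.
have [-> ->] : (j.+1 - q = 0 /\ j - q = 0)%N by lia.
by rewrite !bin0n; case: q lt_jq.
Qed.

Section Jacobsthal.

Variables (R : comPzRingType) (S : R).

(* [jacobsthal j] is the Jacobsthal polynomial J_(j+1) evaluated at S. *)
Definition jacobsthal (j : nat) : R :=
  \sum_(0 <= q < j.+1) 'C(j - q, q)%:R * S ^+ q.

Lemma jacobsthal_widen j N : (j < N)%N ->
  \sum_(0 <= q < N) 'C(j - q, q)%:R * S ^+ q = jacobsthal j.
Proof.
move=> lt_jN; rewrite /jacobsthal (big_cat_nat _ (n := j.+1)) //=.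
rewrite [X in _ + X]big1_seq ?addr0 // => q; rewrite mem_index_iota.
case/andP=> _ /andP[lt_jq _].
have -> : (j - q = 0)%N by lia.
by rewrite bin0n; case: q lt_jq => // q _; rewrite mul0r.
Qed.

Lemma jacobsthal0 : jacobsthal 0 = 1.
Proof. by rewrite /jacobsthal big_nat1 mulr1. Qed.

Lemma jacobsthal1 : jacobsthal 1 = 1.
Proof. by rewrite /jacobsthal big_nat_recr // big_nat1 /= bin0n mul0r addr0 mulr1. Qed.

Lemma jacobsthalSS j : jacobsthal j.+2 = jacobsthal j.+1 + S * jacobsthal j.
Proof.
have shift_sum i N : (i < N)%N ->
    jacobsthal i.+1 = 1 + \sum_(0 <= q < N) 'C(i - q, q.+1)%:R * S ^+ q.+1.
  move=> lt_iN; rewrite -(@jacobsthal_widen i.+1 N.+1) //.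
  rewrite big_nat_recl // subn0 bin0 expr0 mulr1.
  by under eq_big_nat => q _ do rewrite subSS.
rewrite (shift_sum j.+1 j.+2) // (shift_sum j j.+2) //.
under eq_big_nat => q _ do rewrite bin_diagS addnC natrD mulrDl.
rewrite big_split /= addrA -(@jacobsthal_widen j j.+2) // mulr_sumr.
by congr (_ + _); apply: eq_bigr => q _; rewrite exprS mulrCA.
Qed.

Variable LW : nat -> R.

(* [conv k] is T_(k+2); the shift keeps truncated subtraction out of the
   summation range. *)
Definition conv (k : nat) : R :=
  \sum_(0 <= r < k) LW r * jacobsthal (k - r.+1).

Lemma conv0 : conv 0 = 0.
Proof. exact: big_geq. Qed.

Lemma convS k : conv k.+1 = conv k + S * conv k.-1 + LW k.
Proof.
case: k => [|k].
  by rewrite /= !conv0 /conv big_nat1 jacobsthal0 mulr0 !add0r mulr1.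
rewrite /conv !big_nat_recr //= !subnn subSn // subnn jacobsthal0 jacobsthal1 !mulr1.
congr (_ + _); rewrite addrAC; congr (_ + _); rewrite mulr_sumr -big_split /=.
apply: eq_big_nat => r /andP[_ lt_rk].
rewrite (_ : k.+2 - r.+1 = (k - r.+1).+2)%N; last by lia.
rewrite (_ : k.+1 - r.+1 = (k - r.+1).+1)%N; last by lia.
by rewrite jacobsthalSS mulrDr mulrCA.
Qed.

Lemma recursion_sum_conv (F : R) k :
  \sum_(0 <= r < k - 2) LW r * \sum_(0 <= q < k)
      'C(k - 3 - r - q, q)%:R * F * S ^+ q
  = F * conv (k - 2).
Proof.
rewrite /conv mulr_sumr; apply: eq_big_nat => r /andP[_ lt_r].
have -> : (k - 2 - r.+1 = k - 3 - r)%N by lia.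
rewrite -(@jacobsthal_widen _ k); last by lia.
rewrite [RHS]mulrCA; congr (_ * _); rewrite mulr_sumr.
by apply: eq_bigr => q _; rewrite mulrAC mulrC.
Qed.

End Jacobsthal.

Theorem three_term_recurrence (R : comPzRingType) (c S F : R) (LW : nat -> R) :
  (forall k : nat, (1 <= k)%N ->
     LW k = c * LW k.-1
            + \sum_(0 <= r < k - 2)
                LW r * \sum_(0 <= q < k) 'C(k - 3 - r - q, q)%:R * F * S ^+ q) ->
  forall k : nat, (3 <= k)%N ->
    LW k - (c + 1) * LW k.-1 + (c - S) * LW (k - 2)%N + (c * S - F) * LW (k - 3)%N = 0.
Proof.
move=> LW_rec.
have {}LW_rec k : (1 <= k)%N -> LW k = c * LW k.-1 + F * conv S LW (k - 2).
  by move=> k_gt0; rewrite LW_rec // recursion_sum_conv.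
case=> [|[|[|j]]] // _.
rewrite (LW_rec j.+3) // (LW_rec j.+2) // (LW_rec j.+1) //= !subSS !subn0 subn1.
by rewrite convS; ring.
Qed.

Theorem lemma5p3 (n m : nat) (a : 'I_n -> bool) (e : rel 'I_n)
  (LW : nat -> int) :
  is_threshold_graph_of a e ->
  connected_graph e ->
  (4 <= n)%N ->
  graph_size e = m ->
  (n.-1 < m)%N -> (m < 'C(n, 2))%N ->
  LW 0%N = 1 ->
  (forall k : nat, (1 <= k)%N ->
     LW k = (ctype1 a)%:Z * LW k.-1
            + \sum_(0 <= r < k - 2)
                LW r * \sum_(0 <= q < k)
                  ('C(k - 3 - r - q, q))%:Z * (F1 a)%:Z * (sum_b a)%:Z ^+ q) ->
  forall k : nat, (3 <= k)%N ->
    LW k - ((ctype1 a)%:Z + 1) * LW k.-1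
    + ((ctype1 a)%:Z - (sum_b a)%:Z) * LW (k - 2)%N
    + ((ctype1 a)%:Z * (sum_b a)%:Z - (F1 a)%:Z) * LW (k - 3)%N = 0.
Proof.
move=> _ _ _ _ _ _ _ LW_rec; apply: three_term_recurrence => k /LW_rec ->.
by under [in RHS]eq_bigr do under eq_bigr do rewrite natz.
Qed.
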